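(* Let $G$ be a large scale group having a basis $\{G_i\}_{i\ge1}$ for boundedly generated subgroups consisting of unbounded subgroups. If $m\le\infty$ and each $G_i$ (with the large scale structure induced from $G$) has at most $m$ ends, then $G$ has at most $m$ ends.
   Context: A large scale group is a group $G$ with a bornology $\mathcal B$ (a cover closed under subsets and finite unions) closed under inverses and products; uniformly bounded covers are those refining $\{gB\}_{g\in G}$ for some $B\in\mathcal B$; bounded sets are members of $\mathcal B$. A subgroup $H$ carries the induced large scale group structure with bornology $\{B\in\mathcal B: B\subseteq H\}$. $G$ (or a subgroup) is boundedly generated if it is generated by a bounded symmetric set. A basis for boundedly generated subgroups of $G$ is a sequence $\{G_i\}_{i\ge1}$ of boundedly generated subgroups of $G$ such that every bounded subset of $G$ is contained in some $G_i$ (equivalently, every boundedly generated subgroup lies in some $G_i$). For $A\subseteq G$ and a cover $\mathcal U$, $st(A,\mathcal U)$ is the union of members of $\mathcal U$ meeting $A$; $A$ is coarsely clopen if $st(A,\mathcal U)\cap st(G\setminus A,\mathcal U)$ is bounded for every uniformly bounded $\mathcal U$. An end is a family of unbounded coarsely clopen sets maximal with respect to all finite intersections being unbounded; the number of ends is the cardinality of the set of ends. *)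

From Stdlib Require Import List.
Import ListNotations.
Set Implicit Arguments.

Record LSGroup := {
  carrier :> Type;
  mul : carrier -> carrier -> carrier;
  inv : carrier -> carrier;
  one : carrier;
  mulA : forall x y z, mul x (mul y z) = mul (mul x y) z;
  mul1g : forall x, mul one x = x;
  mulVg : forall x, mul (inv x) x = one;
  bounded : (carrier -> Prop) -> Prop;
  bounded_cover : forall x, exists B, bounded B /\ B x;
  bounded_sub : forall A B, bounded B -> (forall x, A x -> B x) -> bounded A;
  bounded_union : forall A B, bounded A -> bounded B ->
      bounded (fun x => A x \/ B x);
  bounded_inv : forall B, bounded B -> bounded (fun x => B (inv x));
  bounded_mul : forall A B, bounded A -> bounded B ->
      bounded (fun x => exists a b, A a /\ B b /\ x = mul a b)
}.

Section LS.
Variable G : LSGroup.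

Definition subset (A B : G -> Prop) := forall x, A x -> B x.

Definition is_subgroup (H : G -> Prop) : Prop :=
  H (one G) /\ (forall x y, H x -> H y -> H (mul G x y)) /\
  (forall x, H x -> H (inv G x)).

Definition generated (S : G -> Prop) : G -> Prop :=
  fun x => forall K, is_subgroup K -> subset S K -> K x.

Definition symmetric (S : G -> Prop) := forall x, S x -> S (inv G x).

Definition bdd_generated_subgroup (H : G -> Prop) : Prop :=
  is_subgroup H /\ exists S, bounded G S /\ symmetric S /\
    forall x, H x <-> generated S x.

(** Induced large scale structure on a subgroup H: bounded sets are the
    bounded sets of G contained in H. *)
Definition bddH (H : G -> Prop) (A : G -> Prop) : Prop :=
  bounded G A /\ subset A H.

Definition unif_bdd_cover (H : G -> Prop) (U : (G -> Prop) -> Prop) : Prop :=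
  (forall x, H x -> exists V, U V /\ V x) /\
  (forall V, U V -> subset V H) /\
  exists B, bddH H B /\
    forall V, U V -> exists h, H h /\
      subset V (fun x => exists b, B b /\ x = mul G h b).

Definition star (A : G -> Prop) (U : (G -> Prop) -> Prop) : G -> Prop :=
  fun x => exists V, U V /\ V x /\ exists a, A a /\ V a.

Definition coarsely_clopen (H : G -> Prop) (A : G -> Prop) : Prop :=
  subset A H /\
  forall U, unif_bdd_cover H U ->
    bddH H (fun x => star A U x /\ star (fun y => H y /\ ~ A y) U x).

Definition inter_list (H : G -> Prop) (l : list (G -> Prop)) : G -> Prop :=
  fun x => H x /\ forall A, In A l -> A x.

Definition ends_family (H : G -> Prop) (E : (G -> Prop) -> Prop) : Prop :=
  (forall A, E A -> coarsely_clopen H A /\ ~ bddH H A) /\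
  (forall l, (forall A, In A l -> E A) -> ~ bddH H (inter_list H l)).

Definition is_end (H : G -> Prop) (E : (G -> Prop) -> Prop) : Prop :=
  ends_family H E /\
  forall F, ends_family H F -> (forall A, E A -> F A) -> forall A, F A -> E A.

(** H has at most m ends, m in {0,1,2,...} u {oo} (None = oo) *)
Definition at_most_ends (H : G -> Prop) (m : option nat) : Prop :=
  match m with
  | None => True
  | Some n => exists l : list ((G -> Prop) -> Prop), length l <= n /\
      forall E, is_end H E -> exists E', In E' l /\ forall A, E A <-> E' A
  end.

Definition bdd_gen_basis (Gi : nat -> G -> Prop) : Prop :=
  (forall i, bdd_generated_subgroup (Gi i)) /\
  (forall B, bounded G B -> exists i, subset B (Gi i)).

End LS.

(** For [m = ∞] there is nothing
    to prove; for [m = n] finite, assume every [Gi i] has at most [n] ends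
    while [G] has more than [n] ends.
    - Ends behave like ultrafilters on coarsely clopen sets, so [n+1] pairwise
      distinct ends of [G] are separated by [n+1] pairwise disjoint, unbounded,
      coarsely clopen sets [C_0, ..., C_n]; conversely, pairwise disjoint
      unbounded coarsely clopen sets lie in pairwise distinct ends.
    - A coarsely clopen [C] is crossed by right multiplication with a bounded
      generating set [S_0] of [G_0] only at a bounded set of points.  Hence
      either [C] meets some [G_k], and every larger [G_l], in an unbounded
      set, or a left translate [x G_0] lies in [C] with [x] arbitrary in
      [C \ G_k]; the latter again forces [C ∩ G_l] to be unbounded once
      [x ∈ G_l], because [G_0] is unbounded.
    - Choosing one [l] that works for all [C_j], the traces [C_j ∩ G_l] are
      pairwise disjoint, unbounded and coarsely clopen in [G_l], so [G_l] has
      more than [n] ends: a contradiction. *)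

From Stdlib Require Import List Classical Lia.
Import ListNotations.
From mathcomp Require classical_sets.

Set Implicit Arguments.

Definition same_end {X : Type} (E E' : X -> Prop) : Prop := forall A, E A <-> E' A.

Definition disjoint (G : LSGroup) (A B : G -> Prop) : Prop :=
  forall x, A x -> B x -> False.

Definition restrict {G : LSGroup} (K C : G -> Prop) : G -> Prop :=
  fun x => C x /\ K x.

Section ListFacts.

Lemma Forall2_Forall_l {A B : Type} (R : A -> B -> Prop) (P : B -> Prop)
    {Q : A -> Prop} l l' :
  Forall2 R l l' -> Forall P l' -> (forall a b, R a b -> P b -> Q a) -> Forall Q l.
Proof.
  intros hR. induction hR as [|a b l l' hab hR IH]; intros hP hQ; constructor;
    inversion hP; eauto.
Qed.

Lemma Forall2_Forall_r {A B : Type} (R : A -> B -> Prop) (P : A -> Prop)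
    {Q : B -> Prop} l l' :
  Forall2 R l l' -> Forall P l -> (forall a b, R a b -> P a -> Q b) -> Forall Q l'.
Proof.
  intros hR. induction hR as [|a b l l' hab hR IH]; intros hP hQ; constructor;
    inversion hP; eauto.
Qed.

Lemma ForallOrdPairs_map {A B : Type} {R : A -> A -> Prop} {R' : B -> B -> Prop}
    {f : A -> B} {l} :
  (forall a b, R a b -> R' (f a) (f b)) ->
  ForallOrdPairs R l -> ForallOrdPairs R' (map f l).
Proof.
  intros hf hl. induction hl as [|a l ha hl IH]; simpl; constructor; auto.
  apply Forall_map. exact (Forall_impl _ (hf a) ha).
Qed.

Lemma distinct_classes_bound {A : Type} {LF M : list (A -> Prop)} :
  ForallOrdPairs (fun a b => ~ same_end a b) LF ->
  Forall (fun F => exists F', In F' M /\ same_end F F') LF ->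
  length LF <= length M.
Proof.
  revert M. induction LF as [|F LF IH]; intros M hpw hM; simpl; [lia|].
  inversion hpw as [|? ? hF hpw']; subst.
  inversion hM as [|? ? [F' [inF' eF]] hM']; subst.
  destruct (in_split _ _ inF') as [M1 [M2 ->]].
  enough (length LF <= length (M1 ++ M2)) by (rewrite length_app in *; simpl; lia).
  apply IH; [exact hpw'|]. rewrite Forall_forall in hF, hM' |- *.
  intros F2 inF2. destruct (hM' F2 inF2) as [e [he e2]]. exists e. split; [|exact e2].
  apply in_app_or in he. apply in_or_app. destruct he as [he|[<-|he]]; auto.
  exfalso. apply (hF F2 inF2). intros Z. rewrite (eF Z), (e2 Z). tauto.
Qed.

End ListFacts.

Section GroupFacts.
Context {G : LSGroup}.

Lemma mulgV (x : G) : mul G x (inv G x) = one G.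
Proof.
  rewrite <- (mul1g G (mul G x (inv G x))), <- (mulVg G (inv G x)) at 1.
  rewrite <- mulA, (mulA G (inv G x) x (inv G x)), mulVg, mul1g. apply mulVg.
Qed.

Lemma mulg1 (x : G) : mul G x (one G) = x.
Proof. rewrite <- (mulVg G x), mulA, mulgV. apply mul1g. Qed.

Lemma mulKg (x y : G) : mul G (inv G x) (mul G x y) = y.
Proof. rewrite mulA, mulVg. apply mul1g. Qed.

Lemma mulKV (w y : G) : mul G (mul G w y) (inv G y) = w.
Proof. rewrite <- mulA, mulgV. apply mulg1. Qed.

Lemma mulVK (w y : G) : mul G (mul G w (inv G y)) y = w.
Proof. rewrite <- mulA, mulVg. apply mulg1. Qed.

End GroupFacts.

Section Bornology.
Context {G : LSGroup}.

Lemma bounded_single (a : G) : bounded G (fun x => x = a).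
Proof.
  destruct (bounded_cover G a) as [B [bB Ba]].
  apply (bounded_sub G _ B bB). intros x ->. exact Ba.
Qed.

(** Left translates of bounded sets are bounded: [g^-1 A ⊆ {g^-1} · A]. *)
Lemma bounded_translate (g : G) {A : G -> Prop} :
  bounded G A -> bounded G (fun y => A (mul G g y)).
Proof.
  intros bA. apply (bounded_sub G _ _ (bounded_mul G _ _ (bounded_single (inv G g)) bA)).
  intros y Ay. exists (inv G g), (mul G g y). split; [reflexivity|].
  split; [exact Ay|]. symmetry. apply mulKg.
Qed.

Lemma bddH_sub (H A B : G -> Prop) : bddH G H B -> subset G A B -> bddH G H A.
Proof.
  intros [bB sB] sAB. split.
  - exact (bounded_sub G A B bB sAB).
  - intros x Ax. apply sB, sAB, Ax.
Qed.

Lemma bddH_union (H A B : G -> Prop) :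
  bddH G H A -> bddH G H B -> bddH G H (fun x => A x \/ B x).
Proof.
  intros [bA sA] [bB sB]. split.
  - apply bounded_union; assumption.
  - intros x [Ax|Bx]; auto.
Qed.

Lemma bddH_empty (H : G -> Prop) : bddH G H (fun _ => False).
Proof.
  split.
  - apply (bounded_sub G _ _ (bounded_single (one G))). intros x [].
  - intros x [].
Qed.

Lemma translates_cover (B : G -> Prop) : bounded G B -> B (one G) ->
  unif_bdd_cover G (fun _ => True)
    (fun V => exists g, V = fun y => exists b, B b /\ y = mul G g b).
Proof.
  intros bB B1. split; [|split].
  - intros x _. eexists; split; [exists x; reflexivity|].
    exists (one G). split; [exact B1|symmetry; apply mulg1].
  - intros V _ x _. exact I.
  - exists B. split; [split; [exact bB|intros x _; exact I]|].
    intros V [g ->]. exists g. split; [exact I|intros x h; exact h].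
Qed.

Lemma extend_cover (K : G -> Prop) U : unif_bdd_cover G K U ->
  unif_bdd_cover G (fun _ => True)
    (fun V => U V \/ exists x, ~ K x /\ V = (fun y => y = x)).
Proof.
  intros [ucov [_ [B [[bB _] uref]]]]. split; [|split].
  - intros x _. destruct (classic (K x)) as [Kx|nKx].
    + destruct (ucov x Kx) as [V [UV Vx]]. exists V. split; [left; exact UV|exact Vx].
    + exists (fun y => y = x). split; [right; exists x; auto|reflexivity].
  - intros V _ x _. exact I.
  - exists (fun x => B x \/ x = one G). split.
    + split; [apply bounded_union; [exact bB|apply bounded_single]|intros ? ?; exact I].
    + intros V [UV|[x [_ ->]]].
      * destruct (uref V UV) as [h [_ sV]]. exists h. split; [exact I|].
        intros y Vy. destruct (sV y Vy) as [b [Bb ->]]. exists b; auto.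
      * exists x. split; [exact I|]. intros y ->. exists (one G).
        split; [right; reflexivity|symmetry; apply mulg1].
Qed.

End Bornology.

Section CoarselyClopen.
Context {G : LSGroup} (H : G -> Prop).

Lemma star_mono (A B : G -> Prop) U :
  subset G A B -> subset G (star G A U) (star G B U).
Proof.
  intros sAB x [V [UV [Vx [a [Aa Va]]]]]. exists V. repeat split; auto.
  exists a. auto.
Qed.

Lemma cc_complement (A : G -> Prop) :
  coarsely_clopen G H A -> coarsely_clopen G H (fun y => H y /\ ~ A y).
Proof.
  intros [sA cA]. split; [intros x [Hx _]; exact Hx|].
  intros U hU. apply (bddH_sub (cA U hU)). intros x [s1 s2]. split; [|exact s1].
  apply (star_mono (A := fun y => H y /\ ~ (H y /\ ~ A y))); [|exact s2].
  intros y [Hy nA]. apply NNPP. intro nAy. apply nA. auto.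
Qed.

(** Coarsely clopen sets are closed under intersection: the common boundary
    of [X ∩ Y] lies in the union of the boundaries of [X] and [Y]. *)
Lemma cc_inter (X Y : G -> Prop) :
  coarsely_clopen G H X -> coarsely_clopen G H Y ->
  coarsely_clopen G H (fun x => X x /\ Y x).
Proof.
  intros [sX cX] [sY cY]. split; [intros x [Xx _]; auto|].
  intros U hU. apply (bddH_sub (bddH_union (cX U hU) (cY U hU))).
  intros x [[V1 [U1 [V1x [a [[Xa Ya] V1a]]]]] [V2 [U2 [V2x [b [[Hb nb] V2b]]]]]].
  destruct (classic (X b)) as [Xb|nXb]; [right|left]; split.
  - exists V1. repeat split; auto. exists a; auto.
  - exists V2. repeat split; auto. exists b. split; auto.
  - exists V1. repeat split; auto. exists a; auto.
  - exists V2. repeat split; auto. exists b. split; auto.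
Qed.

Lemma cc_whole : coarsely_clopen G H H.
Proof.
  split; [intros x h; exact h|]. intros U _.
  apply (bddH_sub (bddH_empty H)).
  intros x [_ [V [_ [_ [a [[Ha nHa] _]]]]]]. auto.
Qed.

End CoarselyClopen.

Section Ends.
Context {G : LSGroup} (H : G -> Prop).

Lemma ends_family_sub (F F' : (G -> Prop) -> Prop) :
  ends_family G H F -> (forall Y, F' Y -> F Y) -> ends_family G H F'.
Proof. intros [hcc hint] s. split; auto. Qed.

Lemma inter_list_repeat (X : G -> Prop) l :
  subset G X H -> (forall A, In A l -> A = X) -> subset G X (inter_list G H l).
Proof.
  intros sX hl x Xx. split; auto. intros A HA. rewrite (hl A HA). exact Xx.
Qed.

Lemma inter_list_reduce (X : G -> Prop) (E : (G -> Prop) -> Prop) l :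
  (forall A, In A l -> E A \/ A = X) ->
  exists l', (forall A, In A l' -> E A) /\
    subset G (inter_list G H (X :: l')) (inter_list G H l).
Proof.
  induction l as [|Y l IH]; intros hl.
  - exists []. split; [intros A []|]. intros x [Hx _]. split; [exact Hx|intros A []].
  - destruct IH as [l' [hl' sub]]; [intros A HA; apply hl; simpl; auto|].
    destruct (hl Y (or_introl eq_refl)) as [EY| ->].
    + exists (Y :: l'). split; [intros A [<-|HA]; auto|].
      intros x [Hx hx].
      assert (hx' : inter_list G H (X :: l') x).
      { split; [exact Hx|]. intros A [<-|HA]; apply hx; simpl; auto. }
      split; [exact Hx|]. intros A [<-|HA].
      * apply hx; simpl; auto.
      * exact (proj2 (sub x hx') A HA).
    + exists l'. split; [exact hl'|]. intros x hx. destruct (sub x hx) as [Hx hx'].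
      split; [exact Hx|]. intros A [<-|HA]; [apply (proj2 hx); simpl; auto|exact (hx' A HA)].
Qed.

Lemma end_extend (X : G -> Prop) E :
  is_end G H E -> coarsely_clopen G H X ->
  (forall l, (forall A, In A l -> E A) -> ~ bddH G H (inter_list G H (X :: l))) ->
  E X.
Proof.
  intros [[Ecc Eint] Emax] cX hX.
  apply (Emax (fun Y => E Y \/ Y = X)); [|auto|auto]. split.
  - intros A [EA| ->]; [auto|]. split; [exact cX|]. intro bX.
    apply (hX [] (fun A h => match h with end)).
    apply (bddH_sub bX). intros x [_ hx]. apply hx. simpl; auto.
  - intros l hl bl. destruct (inter_list_reduce E l hl) as [l' [hl' sub]].
    exact (hX l' hl' (bddH_sub bl sub)).
Qed.

Lemma end_complement {A : G -> Prop} {E} :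
  is_end G H E -> coarsely_clopen G H A -> E A \/ E (fun y => H y /\ ~ A y).
Proof.
  intros hE cA. destruct (classic (E A)) as [EA|nEA]; [left; exact EA|right].
  apply (end_extend hE (cc_complement cA)). intros l hl bl.
  apply nEA. apply (end_extend hE cA). intros l2 hl2 bl2.
  destruct hE as [[_ Eint] _]. apply (Eint (l ++ l2)).
  - intros B HB. apply in_app_or in HB. destruct HB; auto.
  - apply (bddH_sub (bddH_union bl bl2)).
    intros x [Hx hx]. destruct (classic (A x)) as [Ax|nAx]; [right|left];
      (split; [exact Hx|]); intros B [<-|HB]; auto; apply hx, in_or_app; auto.
Qed.

Lemma end_inter {X Y : G -> Prop} {E} :
  is_end G H E -> E X -> E Y -> E (fun x => X x /\ Y x).
Proof.
  intros hE EX EY. pose proof hE as [[Ecc Eint] _].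
  apply (end_extend hE); [apply cc_inter; apply Ecc; assumption|].
  intros l hl bl. apply (Eint (X :: Y :: l)); [intros B [<-|[<-|HB]]; auto|].
  apply (bddH_sub bl). intros x [Hx hx]. split; [exact Hx|].
  intros B [<-|HB]; [split; apply hx; simpl; auto|apply hx; simpl; auto].
Qed.

Lemma end_whole {E} : is_end G H E -> E H.
Proof.
  intros hE. pose proof hE as [[_ Eint] _].
  apply (end_extend hE (cc_whole H)). intros l hl bl. apply (Eint l hl).
  apply (bddH_sub bl). intros x [Hx hx]. split; [exact Hx|].
  intros B [<-|HB]; [exact Hx|exact (hx B HB)].
Qed.

Lemma end_members_meet {X Y : G -> Prop} {E} :
  is_end G H E -> E X -> E Y -> ~ disjoint G X Y.
Proof.
  intros [[_ Eint] _] EX EY dXY. apply (Eint [X; Y]).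
  - intros A [<-|[<-|[]]]; assumption.
  - apply (bddH_sub (bddH_empty H)). intros x [_ hx].
    apply (dXY x); apply hx; simpl; auto.
Qed.

Lemma distinct_ends_separated {E E'} :
  is_end G H E -> is_end G H E' -> ~ same_end E E' ->
  exists X Y, E X /\ E' Y /\ disjoint G X Y.
Proof.
  intros hE hE' ne. apply not_all_ex_not in ne. destruct ne as [A nA].
  destruct (classic (E A)) as [EA|nEA].
  - assert (nE'A : ~ E' A) by (intro; apply nA; split; auto).
    destruct (end_complement hE' (proj1 (proj1 (proj1 hE) A EA))) as [h|h];
      [contradiction|].
    exists A, (fun y => H y /\ ~ A y). repeat split; auto. intros x Ax [_ n]; auto.
  - assert (E'A : E' A) by (apply NNPP; intro; apply nA; split; intro; contradiction).
    destruct (end_complement hE (proj1 (proj1 (proj1 hE') A E'A))) as [h|h];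
      [contradiction|].
    exists (fun y => H y /\ ~ A y), A. repeat split; auto. intros x [_ n] Ax; auto.
Qed.

Lemma chain_list_member (X : G -> Prop) (F : ((G -> Prop) -> Prop) -> Prop) :
  (forall D D', F D -> F D' -> (forall Y, D Y -> D' Y) \/ (forall Y, D' Y -> D Y)) ->
  forall l, (forall Y, In Y l -> (exists2 D, F D & D Y) \/ Y = X) ->
  exists D, (F D \/ forall Y, ~ D Y) /\ forall Y, In Y l -> D Y \/ Y = X.
Proof.
  intros Ftot. induction l as [|Y l IH]; intros hl.
  - exists (fun _ => False). split; [right; auto|intros Y []].
  - destruct IH as [D [hD hDl]]; [intros Z HZ; apply hl; simpl; auto|].
    destruct (hl Y (or_introl eq_refl)) as [[D' FD' D'Y]| ->].
    + destruct hD as [FD|eD].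
      * destruct (Ftot D D' FD FD') as [s|s].
        -- exists D'. split; [left; exact FD'|]. intros Z [<-|HZ]; [auto|].
           destruct (hDl Z HZ); auto.
        -- exists D. split; [left; exact FD|]. intros Z [<-|HZ]; auto.
      * exists D'. split; [left; exact FD'|]. intros Z [<-|HZ]; [auto|].
        destruct (hDl Z HZ) as [h|h]; [exfalso; exact (eD Z h)|auto].
    + exists D. split; [exact hD|]. intros Z [<-|HZ]; auto.
Qed.

(** Every unbounded coarsely clopen set belongs to some end (Zorn's lemma
    applied to the families extending [{X}]). *)
Lemma end_exists (X : G -> Prop) :
  coarsely_clopen G H X -> ~ bddH G H X -> exists F, is_end G H F /\ F X.
Proof.
  intros cX uX.
  set (P := fun F => ends_family G H (fun Y => F Y \/ Y = X)).
  assert (P_empty : forall D, (forall Y, ~ D Y) -> P D).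
  { intros D hD. split.
    - intros A [DA| ->]; [exfalso; exact (hD A DA)|]. split; auto.
    - intros l hl bl. apply uX. apply (bddH_sub bl).
      apply inter_list_repeat; [exact (proj1 cX)|].
      intros A HA. destruct (hl A HA) as [h|h]; [exfalso; exact (hD A h)|exact h]. }
  destruct (classical_sets.Zorn_bigcup (P := P)) as [A [PA Amax]].
  - intros F FP Ftot. split.
    + intros Y [[D FD DY]| ->].
      * exact (proj1 (FP D FD) Y (or_introl DY)).
      * exact (proj1 (P_empty (fun _ => False) (fun _ h => h)) X (or_intror eq_refl)).
    + intros l hl. destruct (chain_list_member F Ftot l hl) as [D [hD hDl]].
      assert (PD : P D) by (destruct hD as [FD|eD]; [exact (FP D FD)|exact (P_empty D eD)]).
      exact (proj2 PD l hDl).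
  - exists (fun Y => A Y \/ Y = X). split; [|right; reflexivity]. split; [exact PA|].
    intros F' hF' sub Y F'Y. apply NNPP. intro nY. apply (Amax F').
    + split; [intros Z AZ; apply sub; left; exact AZ|].
      intro s. apply nY. left. exact (s Y F'Y).
    + apply (ends_family_sub (fun Y => F' Y \/ Y = X) hF').
      intros Z [h| ->]; auto.
Qed.

End Ends.

Section CountingEnds.
Context {G : LSGroup} (H : G -> Prop).

Lemma many_distinct_ends n : ~ at_most_ends G H (Some n) ->
  exists L, length L = S n /\ Forall (is_end G H) L /\
    ForallOrdPairs (fun a b => ~ same_end a b) L.
Proof.
  intros hno.
  enough (up_to : forall k, k <= S n -> exists L, length L = k /\
    Forall (is_end G H) L /\ ForallOrdPairs (fun a b => ~ same_end a b) L)
    by exact (up_to (S n) (le_n _)).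
  induction k as [|k IH]; intros hk.
  - exists []. repeat constructor.
  - destruct IH as [L [hlen [hL hpw]]]; [lia|].
    assert (fresh : exists E, is_end G H E /\ Forall (fun E' => ~ same_end E E') L).
    { apply NNPP. intro nx. apply hno. exists L. split; [lia|].
      intros E hE. apply NNPP. intro ny. apply nx. exists E. split; [exact hE|].
      apply Forall_forall. intros E' hE' ex. apply ny. exists E'. auto. }
    destruct fresh as [E [hE hEL]].
    exists (E :: L). simpl. split; [congruence|]. split; constructor; auto.
Qed.

Lemma disjoint_shrink Cs' Cs :
  Forall2 (subset G) Cs' Cs -> ForallOrdPairs (disjoint G) Cs ->
  ForallOrdPairs (disjoint G) Cs'.
Proof.
  intros hsub. induction hsub as [|C' C l' l sC hsub IH]; intros hd; constructor;
    inversion hd as [|? ? hC hl]; subst; auto.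
  apply (Forall2_Forall_l hsub hC). intros a b sab dCb x C'x ax.
  exact (dCb x (sC x C'x) (sab x ax)).
Qed.

Lemma separation_step E L Cs : is_end G H E ->
  Forall (fun E' => is_end G H E' /\ ~ same_end E E') L ->
  Forall2 (fun E' C => E' C) L Cs ->
  exists C0 Cs', E C0 /\ Forall2 (fun E' C => E' C) L Cs' /\
    Forall2 (subset G) Cs' Cs /\ Forall (disjoint G C0) Cs'.
Proof.
  intros hE hL hLC. induction hLC as [|E' C L Cs E'C hLC IH].
  - exists H, []. split; [exact (end_whole hE)|]. repeat constructor.
  - inversion hL as [|? ? [hE' ne] hL']; subst.
    destruct (IH hL') as [C0 [Cs' [EC0 [hLC' [hsub hdis]]]]].
    destruct (distinct_ends_separated hE hE' ne) as [X [Y [EX [E'Y dXY]]]].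
    exists (fun x => C0 x /\ X x), ((fun x => C x /\ Y x) :: Cs').
    split; [exact (end_inter hE EC0 EX)|]. split; [|split].
    + constructor; [exact (end_inter hE' E'C E'Y)|exact hLC'].
    + constructor; [intros x [h _]; exact h|exact hsub].
    + constructor.
      * intros x [_ Xx] [_ Yx]. exact (dXY x Xx Yx).
      * apply (Forall_impl _ (P := disjoint G C0)); [|exact hdis].
        intros C' d x [c0 _] C'x. exact (d x c0 C'x).
Qed.

Lemma separate_ends L :
  Forall (is_end G H) L -> ForallOrdPairs (fun a b => ~ same_end a b) L ->
  exists Cs, Forall2 (fun E C => E C) L Cs /\ ForallOrdPairs (disjoint G) Cs.
Proof.
  induction L as [|E L IH]; intros hL hpw.
  - exists []. split; constructor.
  - inversion hL as [|? ? hE hL']; inversion hpw as [|? ? hne hpw']; subst.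
    destruct (IH hL' hpw') as [Cs [hLC hd]].
    destruct (separation_step hE (Forall_and hL' hne) hLC)
      as [C0 [Cs' [EC0 [hLC' [hsub hdis]]]]].
    exists (C0 :: Cs'). split; constructor; auto. exact (disjoint_shrink hsub hd).
Qed.

Lemma ends_of_disjoint_sets Cs :
  Forall (fun C => coarsely_clopen G H C /\ ~ bddH G H C) Cs ->
  ForallOrdPairs (disjoint G) Cs ->
  exists LF, Forall2 (fun F C => is_end G H F /\ F C) LF Cs /\
    ForallOrdPairs (fun a b => ~ same_end a b) LF.
Proof.
  induction Cs as [|C Cs IH]; intros hC hd.
  - exists []. split; constructor.
  - inversion hC as [|? ? [cC uC] hC']; inversion hd as [|? ? hdC hd']; subst.
    destruct (IH hC' hd') as [LF [hLF hpw]].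
    destruct (end_exists cC uC) as [F [hF FC]].
    exists (F :: LF). split; constructor; auto.
    apply (Forall2_Forall_l hLF hdC). intros F' C' [_ F'C'] dCC' same.
    exact (end_members_meet hF FC (proj2 (same C') F'C') dCC').
Qed.

Lemma disjoint_clopen_bound n Cs : at_most_ends G H (Some n) ->
  Forall (fun C => coarsely_clopen G H C /\ ~ bddH G H C) Cs ->
  ForallOrdPairs (disjoint G) Cs -> length Cs <= n.
Proof.
  intros [M [hM cover]] hC hd.
  destruct (ends_of_disjoint_sets hC hd) as [LF [hLF hpw]].
  rewrite <- (Forall2_length hLF).
  enough (length LF <= length M) by lia.
  apply (distinct_classes_bound hpw).
  apply (Forall2_Forall_l hLF hC). intros F C [hF _] _. exact (cover F hF).
Qed.

Lemma disjoint_clopen_of_many_ends n : ~ at_most_ends G H (Some n) ->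
  exists Cs, length Cs = S n /\
    Forall (fun C => coarsely_clopen G H C /\ ~ bddH G H C) Cs /\
    ForallOrdPairs (disjoint G) Cs.
Proof.
  intros hno. destruct (many_distinct_ends hno) as [L [hlen [hL hpw]]].
  destruct (separate_ends hL hpw) as [Cs [hLC hd]].
  exists Cs. split; [rewrite <- (Forall2_length hLC); exact hlen|split; [|exact hd]].
  apply (Forall2_Forall_r hLC hL). intros E C EC hE. exact (proj1 (proj1 hE) C EC).
Qed.

End CountingEnds.

Section Subgroups.
Context {G : LSGroup}.

Lemma bdd_generated_spec (K : G -> Prop) : bdd_generated_subgroup G K ->
  exists S, bounded G S /\ subset G S K /\ subset G K (generated G S).
Proof.
  intros [_ [S [bS [_ eqS]]]]. exists S. split; [exact bS|split].
  - intros x Sx. apply eqS. intros K' _ sSK'. exact (sSK' x Sx).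
  - intros x Kx. exact (proj1 (eqS x) Kx).
Qed.

(** The traces of a coarsely clopen subset of [G] on a subset [K] are
    coarsely clopen in [K]: covers of [K] extend to covers of [G]. *)
Lemma cc_restrict (K : G -> Prop) {C : G -> Prop} :
  coarsely_clopen G (fun _ => True) C -> coarsely_clopen G K (restrict K C).
Proof.
  intros [_ cC]. split; [intros x [_ Kx]; exact Kx|].
  intros U hU. pose proof hU as [_ [usub _]].
  destruct (cC _ (extend_cover hU)) as [bD _]. split.
  - apply (bounded_sub _ _ _ bD).
    intros x [[V [UV [Vx [a [[Ca Ka] Va]]]]] [V2 [UV2 [V2x [b [[Kb nb] V2b]]]]]]. split.
    + exists V. split; [left; exact UV|]. split; [exact Vx|]. exists a; auto.
    + exists V2. split; [left; exact UV2|]. split; [exact V2x|]. exists b.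
      split; [split; [exact I|intro Cb; apply nb; split; assumption]|exact V2b].
  - intros x [[V [UV [Vx _]]] _]. exact (usub V UV x Vx).
Qed.

Lemma clopen_boundary_bounded {C B : G -> Prop} :
  coarsely_clopen G (fun _ => True) C -> bounded G B ->
  exists D, bounded G D /\ forall x s, B s -> ~ (C x <-> C (mul G x s)) -> D x.
Proof.
  intros [_ cC] bB.
  set (B1 := fun x => B x \/ x = one G).
  assert (cover := translates_cover B1
                     (bounded_union G _ _ bB (bounded_single (one G))) (or_intror eq_refl)).
  destruct (cC _ cover) as [bD _]. eexists. split; [exact bD|].
  intros x s Bs cross.
  set (V := fun y => exists b, B1 b /\ y = mul G x b).
  assert (UV : exists g, V = fun y => exists b, B1 b /\ y = mul G g b) by (exists x; reflexivity).
  assert (Vx : V x) by (exists (one G); split; [right; reflexivity|symmetry; apply mulg1]).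
  assert (Vxs : V (mul G x s)) by (exists s; split; [left; exact Bs|reflexivity]).
  destruct (classic (C x)) as [Cx|nCx]; split; exists V; (split; [exact UV|split; [exact Vx|]]).
  - exists x. split; [exact Cx|exact Vx].
  - exists (mul G x s). split; [split; [exact I|tauto]|exact Vxs].
  - exists (mul G x s). split; [tauto|exact Vxs].
  - exists x. split; [split; [exact I|exact nCx]|exact Vx].
Qed.

Lemma clopen_translation_invariant {K0 S C : G -> Prop} :
  is_subgroup G K0 -> subset G S K0 ->
  (forall x s, S s -> ~ (C x <-> C (mul G x s)) -> K0 x) ->
  forall w y, ~ K0 w -> generated G S y -> (C w <-> C (mul G w y)).
Proof.
  intros [K1 [Kmul Kinv]] sSK0 cross.
  assert (outside : forall w y, ~ K0 w -> K0 y -> ~ K0 (mul G w y)).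
  { intros w y nw Ky h. apply nw. rewrite <- (mulKV w y). apply Kmul; auto. }
  set (K := fun y => K0 y /\ forall w, ~ K0 w -> (C w <-> C (mul G w y))).
  assert (sgK : is_subgroup G K).
  { split; [|split].
    - split; [exact K1|]. intros w _. rewrite mulg1. tauto.
    - intros y1 y2 [h1 e1] [h2 e2]. split; [apply Kmul; assumption|]. intros w nw.
      rewrite mulA, (e1 w nw). apply e2, outside; assumption.
    - intros y [h e]. split; [apply Kinv; exact h|]. intros w nw.
      rewrite (e _ (outside w (inv G y) nw (Kinv y h))), mulVK. tauto. }
  assert (sSK : subset G S K).
  { intros s Ss. split; [exact (sSK0 s Ss)|]. intros w nw.
    apply NNPP. intro ncross. exact (nw (cross w s Ss ncross)). }
  intros w y nw gy. exact (proj2 (gy K sgK sSK) w nw).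
Qed.

End Subgroups.

Section Basis.
Context {G : LSGroup} (Gi : nat -> G -> Prop).
Hypothesis basis : bdd_gen_basis G Gi.
Hypothesis unbounded_Gi : forall i, ~ bddH G (Gi i) (Gi i).

(** Either
    [C ∩ G_k] is already unbounded for the [G_k] containing the boundary of
    [C] along a generating set [S_0] of [G_0], or some [x ∈ C \ G_k] has
    [x G_0 ⊆ C], and [x G_0] is unbounded. *)
Lemma clopen_unbounded_in_basis (C : G -> Prop) :
  coarsely_clopen G (fun _ => True) C -> ~ bddH G (fun _ => True) C ->
  exists B0, bounded G B0 /\
    forall l, subset G B0 (Gi l) -> ~ bddH G (Gi l) (restrict (Gi l) C).
Proof.
  intros cC uC. pose proof basis as [bgen cover].
  destruct (bdd_generated_spec (bgen 0)) as [S0 [bS0 [_ gS0]]].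
  destruct (clopen_boundary_bounded cC bS0) as [D [bD hD]].
  destruct (cover _ (bounded_union G _ _ bD bS0)) as [k sk].
  destruct (bdd_generated_spec (bgen k)) as [Sk [bSk [_ gSk]]].
  destruct (classic (bddH G (Gi k) (restrict (Gi k) C))) as [bk|ubk].
  - assert (exists x, C x /\ ~ Gi k x) as [x [Cx nkx]].
    { apply NNPP. intro nx. apply uC. split; [|intros y _; exact I].
      apply (bounded_sub _ _ _ (proj1 bk)). intros y Cy. split; [exact Cy|].
      apply NNPP. intro nky. apply nx. exists y. auto. }
    assert (xG0 : forall y, Gi 0 y -> C (mul G x y)).
    { intros y y0. apply (clopen_translation_invariant (proj1 (bgen k))
        (fun s Ss => sk s (or_intror Ss)) (fun w s Ss cr => sk w (or_introl (hD w s Ss cr)))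
        x nkx (gS0 y y0)).
      exact Cx. }
    exists (fun y => y = x \/ S0 y).
    split; [apply bounded_union; [apply bounded_single|exact bS0]|].
    intros l sl [bl _]. apply (unbounded_Gi (i := 0)). split; [|intros y h; exact h].
    apply (bounded_sub G _ _ (bounded_translate x bl)). intros y y0.
    split; [exact (xG0 y y0)|].
    destruct (bgen l) as [[_ [lmul _]] _]. apply lmul; [apply sl; left; reflexivity|].
    exact (gS0 y y0 (Gi l) (proj1 (bgen l)) (fun s Ss => sl s (or_intror Ss))).
  - exists Sk. split; [exact bSk|]. intros l sl [bl _]. apply ubk.
    split; [|intros x [_ kx]; exact kx].
    apply (bounded_sub _ _ _ bl). intros x [Cx kx]. split; [exact Cx|].
    exact (gSk x kx (Gi l) (proj1 (bgen l)) sl).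
Qed.

(** Finitely many conditions, each holding on all [G_l] containing some
    bounded set, hold simultaneously on one [G_l]: the union of the bounded
    sets is bounded and lies in some [G_l]. *)
Lemma basis_common_index (Q : (G -> Prop) -> nat -> Prop) Cs :
  Forall (fun C => exists B0, bounded G B0 /\ forall l, subset G B0 (Gi l) -> Q C l) Cs ->
  exists l, Forall (fun C => Q C l) Cs.
Proof.
  intros hC.
  assert (common : exists B, bounded G B /\
            Forall (fun C => forall l, subset G B (Gi l) -> Q C l) Cs).
  { induction hC as [|C Cs [B0 [bB0 h0]] _ IH].
    - exists (fun x => x = one G). split; [apply bounded_single|constructor].
    - destruct IH as [B [bB hB]].
      exists (fun x => B0 x \/ B x). split; [apply bounded_union; assumption|constructor].
      + intros l sl. apply h0. intros x hx. apply sl. left. exact hx.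
      + apply (Forall_impl _ (P := fun C => forall l, subset G B (Gi l) -> Q C l));
          [|exact hB].
        intros C' h l sl. apply h. intros x hx. apply sl. right. exact hx. }
  destruct common as [B [bB hB]]. destruct (proj2 basis B bB) as [l sl].
  exists l. apply (Forall_impl _ (P := fun C => forall l, subset G B (Gi l) -> Q C l));
    [|exact hB].
  intros C h. exact (h l sl).
Qed.

Lemma clopen_family_in_basis Cs :
  Forall (fun C => coarsely_clopen G (fun _ => True) C /\ ~ bddH G (fun _ => True) C) Cs ->
  exists l, Forall (fun C => coarsely_clopen G (Gi l) C /\ ~ bddH G (Gi l) C)
              (map (restrict (Gi l)) Cs).
Proof.
  intros hC.
  destruct (basis_common_index (fun C l => ~ bddH G (Gi l) (restrict (Gi l) C)) (Cs := Cs))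
    as [l hl].
  { apply (Forall_impl _ (P := fun C => coarsely_clopen G (fun _ => True) C /\
                                     ~ bddH G (fun _ => True) C)); [|exact hC].
    intros C [cC uC]. exact (clopen_unbounded_in_basis cC uC). }
  exists l. apply Forall_map. apply (Forall_impl _ (P := fun C =>
    coarsely_clopen G (fun _ => True) C /\ ~ bddH G (Gi l) (restrict (Gi l) C))).
  - intros C [cC uC]. exact (conj (cc_restrict (Gi l) cC) uC).
  - apply Forall_and; [|exact hl].
    exact (Forall_impl _ (fun C h => proj1 h) hC).
Qed.

End Basis.

Theorem theorem9p6 (G : LSGroup) (Gi : nat -> G -> Prop) (m : option nat) :
  bdd_gen_basis G Gi ->
  (forall i, ~ bddH G (Gi i) (Gi i)) ->
  (forall i, at_most_ends G (Gi i) m) ->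
  at_most_ends G (fun _ : G => True) m.
Proof.
  intros basis unbounded_Gi Gi_ends. destruct m as [n|]; [|exact I].
  apply NNPP. intro many_ends.
  destruct (disjoint_clopen_of_many_ends many_ends) as [Cs [len [clopen disj]]].
  destruct (clopen_family_in_basis basis unbounded_Gi clopen) as [l clopen_l].
  assert (disj_l : ForallOrdPairs (disjoint G) (map (restrict (Gi l)) Cs)).
  { refine (ForallOrdPairs_map _ disj). intros A B dAB x [Ax _] [Bx _]. exact (dAB x Ax Bx). }
  assert (bound := disjoint_clopen_bound (Gi_ends l) clopen_l disj_l).
  rewrite length_map, len in bound. lia.
Qed.
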